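(* For any prime $p$, coefficientwise in $\mathbb{Z}[\![t]\!]$, \[ U(t) \equiv \Big( \sum_{m=0}^{[p/6]} u_{m} t^{m} \Big) U(t^{p}) \pmod{p},\qquad V(t) \equiv \Big( \sum_{m=0}^{[p/6]} (6m+1) u_{m} t^{m} \Big) U(t^{p}) \pmod{p}. \] In particular, $u_{r} \equiv 0\pmod{p}$ for all $r\ge1$ and $p\in \{2, 3, 5\}$.
   Context: For $r\ge0$ let $u_{r} = \frac{(6r)!}{(3r)!\, r!^{3}} = \binom{2r}{r} \binom{3r}{r} \binom{6r}{3r}$, and let $U(t)=\sum_{r\ge0}u_rt^r = {}_{3}F_{2}(\tfrac16,\tfrac12,\tfrac56;1,1;1728t)$ and $V(t)=\sum_{r\ge0}(6r+1)u_rt^r=(1+6t\tfrac{d}{dt})U(t)$. $[x]$ is the integer part. A congruence of formal power series modulo $N$ means all coefficients of the difference are divisible by $N$. *)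

From mathcomp Require Import all_boot.
Set Implicit Arguments. Unset Strict Implicit. Unset Printing Implicit Defensive.

(* u_r = (6r)!/((3r)! r!^3) = C(2r,r) C(3r,r) C(6r,3r) *)
Definition u (r : nat) : nat := (6 * r)`! %/ ((3 * r)`! * (r`!) ^ 3).

Definition Ucoef (n : nat) : nat := u n.
Definition Vcoef (n : nat) : nat := (6 * n + 1) * u n.

(* Coefficient of t^n in the formal power series
   (sum_{m=0}^{[p/6]} a m t^m) * U(t^p)
   = sum over m <= p/6 and k with m + p k = n of a m * u k. *)
Definition truncU_coef (a : nat -> nat) (p n : nat) : nat :=
  \sum_(m < (p %/ 6).+1) \sum_(k < n.+1) (if m + p * k == n then a m * u k else 0).

From mathcomp Require Import all_boot zify ring.

(* Write r = k p + m with m < p.  By Lucas' theorem each factor of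
   u_r = C(2r, r) C(3r, r) C(6r, 3r) splits mod p into a k-part and an m-part,
   so u_r = u_m u_k (mod p) when 6m < p.  Otherwise the first of 2m, 3m, 6m to
   reach p makes the bottom digit exceed the top one, and that factor vanishes
   mod p.  On the right-hand side t^n only receives the term m = n mod p,
   k = n div p, and 6n + 1 = 6m + 1 (mod p), which gives both congruences.  For
   p <= 5 only m = 0 survives, so u_{kp} = u_k (mod p) and induction on r shows
   that p divides u_r for r >= 1. *)

Set Implicit Arguments.
Unset Strict Implicit.
Unset Printing Implicit Defensive.

Lemma sum_eqn_mul (F : nat -> nat) i n :
  \sum_(j < n) (j == i :> nat) * F j = if i < n then F i else 0.
Proof.
rewrite -(big_ord1_eq addn) [RHS]big_mkcond; apply: eq_bigr => j _.
by case: ifP => _; rewrite (mul1n, mul0n).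
Qed.

Lemma eq_modnM d m1 m2 n1 n2 :
  m1 = n1 %[mod d] -> m2 = n2 %[mod d] -> m1 * m2 = n1 * n2 %[mod d].
Proof. by move=> e1 e2; rewrite -modnMm e1 e2 modnMm. Qed.

Lemma bin_prime_mod p j : prime p -> 'C(p, j) = (j == 0) + (j == p) %[mod p].
Proof.
move=> p_pr; case: (ltngtP j p) => [j_lt_p | p_lt_j | ->].
- case: posnP => [-> | j_gt0]; first by rewrite bin0.
  by apply/eqP; rewrite mod0n; apply: prime_dvd_bin; rewrite ?j_gt0.
- by rewrite bin_small // gtn_eqF // (leq_ltn_trans _ p_lt_j).
- by rewrite binn gtn_eqF ?prime_gt0.
Qed.

Lemma bin_addn_prime_mod p n k : prime p ->
  'C(p + n, k) = 'C(n, k) + (if p <= k then 'C(n, k - p) else 0) %[mod p].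
Proof.
move=> p_pr; rewrite -Vandermonde -modn_summ.
under eq_bigr => j _ do rewrite -modnMml bin_prime_mod // modnMml mulnDl.
by rewrite modn_summ big_split /= !(sum_eqn_mul (fun j => 'C(n, k - j))) subn0.
Qed.

Lemma bin_lucas p a b c d : prime p -> b < p -> d < p ->
  'C(a * p + b, c * p + d) = 'C(a, c) * 'C(b, d) %[mod p].
Proof.
move=> p_pr b_lt_p d_lt_p; elim: a c => [|a IHa] [|c].
- by rewrite !mul0n !add0n bin0 mul1n.
- by rewrite mul0n add0n bin0n mul0n bin_small //; lia.
- rewrite mulSn -addnA bin_addn_prime_mod // mul0n !add0n leqNgt d_lt_p /=.
  by rewrite addn0 -[d]add0n -(mul0n p) IHa !bin0.
- rewrite mulSn -addnA bin_addn_prime_mod // mulSn -addnA leq_addr addKn.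
  by rewrite -modnDm IHa addnA -mulSn IHa modnDm binS mulnDl.
Qed.

Lemma dvdn_bin_lucas p a b c d : prime p -> b < d < p ->
  p %| 'C(a * p + b, c * p + d).
Proof.
move=> p_pr /andP[b_lt_d d_lt_p]; apply/eqP.
by rewrite bin_lucas ?(ltn_trans b_lt_d) // (bin_small b_lt_d) muln0 mod0n.
Qed.

Section ScaledBinomial.

Variables (p i j k m : nat).
Hypothesis p_pr : prime p.

Lemma bin_scaled_lucas : i <= j -> j * m < p ->
  'C(j * (k * p + m), i * (k * p + m)) = 'C(j * k, i * k) * 'C(j * m, i * m) %[mod p].
Proof.
move=> le_ij jm_lt_p; rewrite !mulnDr !mulnA bin_lucas //.
exact: leq_ltn_trans (leq_mul le_ij (leqnn m)) jm_lt_p.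
Qed.

Lemma dvdn_bin_scaled_carry : i * m < p <= j * m -> j * m < p + i * m ->
  p %| 'C(j * (k * p + m), i * (k * p + m)).
Proof.
move=> /andP[im_lt_p p_le_jm] jm_lt; rewrite !mulnDr !mulnA.
rewrite -(subnKC p_le_jm) addnA -mulSnr; apply: dvdn_bin_lucas => //; lia.
Qed.

End ScaledBinomial.

Lemma u_binomial r : u r = 'C(2 * r, r) * 'C(3 * r, r) * 'C(6 * r, 3 * r).
Proof.
have fact2 := @bin_fact (2 * r) r ltac:(lia).
have fact3 := @bin_fact (3 * r) r ltac:(lia).
have fact6 := @bin_fact (6 * r) (3 * r) ltac:(lia).
rewrite (_ : 2 * r - r = r) in fact2; last by lia.
rewrite (_ : 3 * r - r = 2 * r) in fact3; last by lia.
rewrite (_ : 6 * r - 3 * r = 3 * r) in fact6; last by lia.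
rewrite /u; suff -> : (6 * r)`! =
    'C(2 * r, r) * 'C(3 * r, r) * 'C(6 * r, 3 * r) * ((3 * r)`! * r`! ^ 3).
  by rewrite mulnK // muln_gt0 expn_gt0 !fact_gt0.
by rewrite -fact6 -fact3 -fact2; ring.
Qed.

Lemma u_lucas p k m : prime p -> m < p ->
  u (k * p + m) = (if 6 * m < p then u m * u k else 0) %[mod p].
Proof.
(* Write the lower index r of 'C(2r, r) and 'C(3r, r) as 1 * r (shape of bin_scaled_lucas). *)
move=> p_pr m_lt_p; rewrite !u_binomial -{2 4}(mul1n (k * p + m)).
case: ifP => [m6_lt_p | m6_ge_p].
  have lucas i j : i <= j <= 6 ->
      'C(j * (k * p + m), i * (k * p + m)) = 'C(j * k, i * k) * 'C(j * m, i * m) %[mod p].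
    case/andP=> le_ij j_le6.
    by rewrite bin_scaled_lucas // (leq_ltn_trans _ m6_lt_p) ?leq_mul.
  rewrite (eq_modnM (eq_modnM (lucas 1 2 isT) (lucas 1 3 isT)) (lucas 3 6 isT)).
  by rewrite !mul1n; congr (_ %% p); ring.
rewrite mod0n; apply/eqP.
have [m2_ge_p | m2_lt_p] := leqP p (2 * m).
  by apply/dvdn_mulr/dvdn_mulr/dvdn_bin_scaled_carry => //; lia.
have [m3_ge_p | m3_lt_p] := leqP p (3 * m).
  by apply/dvdn_mulr/dvdn_mull/dvdn_bin_scaled_carry => //; lia.
by apply/dvdn_mull/dvdn_bin_scaled_carry => //; lia.
Qed.

Lemma sum_digit_expansion (F : nat -> nat -> nat) p M n : M <= p ->
  \sum_(m < M) \sum_(k < n.+1) (if m + p * k == n then F m k else 0) =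
  if n %% p < M then F (n %% p) (n %/ p) else 0.
Proof.
move=> M_le_p; rewrite -(sum_eqn_mul (fun m => F m (n %/ p))).
apply: eq_bigr => m _; have m_lt_p := leq_trans (ltn_ord m) M_le_p.
have digitE k : (m + p * k == n) = (m == n %% p :> nat) && (k == n %/ p).
  apply/eqP/andP => [<- | [/eqP-> /eqP->]]; last by rewrite addnC mulnC -divn_eq.
  have p_gt0 : 0 < p := leq_ltn_trans (leq0n m) m_lt_p.
  by rewrite addnC mulnC modnMDl divnMDl // modn_small // divn_small // addn0.
under eq_bigr => k _ do rewrite digitE.
case: (m == n %% p :> nat); last by rewrite big1.
by rewrite -big_mkcond big_ord1_eq ltnS leq_div mul1n.
Qed.

Lemma six_mul_lt_prime p x : prime p -> (x < (p %/ 6).+1) = (6 * x < p).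
Proof.
move=> p_pr; rewrite ltnS leq_divRL // mulnC leq_eqVlt orb_idl // => /eqP six_x.
have: 2 %| p by rewrite -six_x (dvdn_mulr x (isT : 2 %| 6)).
by rewrite dvdn_prime2 // => /eqP two_p; lia.
Qed.

Lemma truncU_coef_prime a p n : prime p ->
  truncU_coef a p n = if 6 * (n %% p) < p then a (n %% p) * u (n %/ p) else 0.
Proof.
move=> p_pr; rewrite /truncU_coef (sum_digit_expansion (fun m k => a m * u k)).
  by rewrite six_mul_lt_prime.
by rewrite ltn_Pdiv ?prime_gt0.
Qed.

Lemma truncU_coefM f a p n : prime p ->
  truncU_coef (fun m => f m * a m) p n = f (n %% p) * truncU_coef a p n.
Proof. by move=> p_pr; rewrite !truncU_coef_prime //; case: ifP; rewrite ?mulnA ?muln0. Qed.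

Lemma u_truncU_coef p n : prime p -> u n = truncU_coef u p n %[mod p].
Proof.
move=> p_pr; rewrite truncU_coef_prime // {1}(divn_eq n p).
by rewrite u_lucas // ltn_pmod ?prime_gt0.
Qed.

Lemma prime_lt6_dvdn_u p r : prime p -> p < 6 -> 0 < r -> p %| u r.
Proof.
move=> p_pr p_lt6; have p_gt0 := prime_gt0 p_pr.
elim/ltn_ind: r => r IHr r_gt0; apply/eqP.
rewrite (divn_eq r p) u_lucas ?ltn_pmod //.
case: ifP => [m6_lt_p | _]; last by rewrite mod0n.
have r_mod0 : r %% p = 0 by lia.
have q_gt0 : 0 < r %/ p by move: (divn_eq r p); rewrite r_mod0; lia.
rewrite r_mod0 mul1n; apply/eqP; apply: IHr q_gt0.
by rewrite ltn_Pdiv ?prime_gt1.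
Qed.

Theorem proposition3p1 :
  (forall p : nat, prime p ->
     (forall n : nat, Ucoef n = truncU_coef u p n %[mod p]) /\
     (forall n : nat, Vcoef n = truncU_coef (fun m => (6 * m + 1) * u m) p n %[mod p]))
  /\
  (forall p r : nat, p \in [:: 2; 3; 5] -> 1 <= r -> p %| u r).
Proof.
split=> [p p_pr | p r].
  split=> n; first exact: u_truncU_coef.
  rewrite /Vcoef truncU_coefM //; apply: eq_modnM; last exact: u_truncU_coef.
  by rewrite {1}(divn_eq n p) mulnDr mulnA -addnA modnMDl.
by rewrite !inE => /or3P[] /eqP->; apply: prime_lt6_dvdn_u.
Qed.
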